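(* Let $n\ge1$. The map $X\mapsto\rho_{-,-}(X)$ is a bijection from the free abelian group $\mathbb{Z}[J(n)]$ onto the set of generalized rank invariants.
   Context: $J(n)=\{(\mathbf x,\mathbf y)\in\mathbb{Z}^n\times\mathbb{Z}^n:\mathbf x\le\mathbf y\}$ (componentwise order). $\mathbb{Z}[J(n)]$ (the group completion $K(Sp^\infty(J(n)))$ of the monoid of finite multisets of elements of $J(n)$) consists of finite formal sums $\sum_i c_i(\mathbf x_i,\mathbf y_i)$, $c_i\in\mathbb{Z}$. A generalized rank invariant is a function $\rho:\mathbb{Z}^n\times\mathbb{Z}^n\to\mathbb{Z}$ such that (1) $\rho_{\mathbf u,\mathbf v}=0$ unless $\mathbf u\le\mathbf v$, and (2) there exist $\mathbf u_0,\mathbf v_0\in\mathbb{Z}^n$ with $\rho_{\mathbf u,\mathbf v}=0$ unless $\mathbf u\ge\mathbf u_0$ and $\mathbf v\le\mathbf v_0$. For $(\mathbf x,\mathbf y)\in J(n)$, $\rho_{\mathbf u,\mathbf v}((\mathbf x,\mathbf y))=1$ if $\mathbf x\le\mathbf u\le\mathbf v\le\mathbf y$ and $0$ otherwise, extended $\mathbb{Z}$-linearly to $\mathbb{Z}[J(n)]$. *)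

From HB Require Import structures.
From mathcomp Require Import all_boot all_order all_algebra.
Set Implicit Arguments. Unset Strict Implicit. Unset Printing Implicit Defensive.
Import Order.TTheory GRing.Theory Num.Theory.
Local Open Scope ring_scope.

Definition vec (n : nat) := {ffun 'I_n -> int}.

Definition vle (n : nat) (x y : vec n) : bool := [forall i, x i <= y i].

Definition is_gen_rank_inv (n : nat) (rho : vec n -> vec n -> int) : Prop :=
  (forall u v : vec n, ~~ vle u v -> rho u v = 0) /\
  (exists u0 v0 : vec n, forall u v : vec n,
      ~~ (vle u0 u && vle v v0) -> rho u v = 0).

(* An element of the free abelian group Z[J(n)]: a finitely supported
   integer-valued coefficient function on J(n) (extended by 0 outside J(n)),
   together with a finite list containing its support. Two elements are the
   same iff their coefficient functions agree. *)
Record ZJ (n : nat) := MkZJ {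
  coef : vec n * vec n -> int;
  supp : seq (vec n * vec n);
  supp_cover : forall p, coef p != 0 -> p \in supp;
  coef_J : forall p, coef p != 0 -> vle p.1 p.2
}.

Definition rank_of (n : nat) (X : ZJ n) (u v : vec n) : int :=
  \sum_(p <- undup (supp X))
     (if [&& vle p.1 u, vle u v & vle v p.2] then coef X p else 0).

From HB Require Import structures.
From mathcomp Require Import all_boot all_order all_algebra.
From mathcomp Require Import ring lra zify.
Set Implicit Arguments. Unset Strict Implicit. Unset Printing Implicit Defensive.
Import Order.TTheory GRing.Theory Num.Theory.
Local Open Scope ring_scope.

(* A pair p = (x, y) in J(n) is an interval [x, y] of Z^n, and rho_{u,v}(p) = 1
   exactly when [u, v] is a subinterval of [x, y].  A proper subinterval has
   strictly smaller width sum_i (v_i - u_i), so rho is unitriangular for the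
   width: at an interval of maximal width in the support of X, rho(X) returns
   the coefficient of X there.  This gives injectivity.  For surjectivity, a
   generalized rank invariant lives on the finitely many intervals of its
   bounding box; subtracting rho of its layer of maximal width lowers that
   width, so induction on the width concludes. *)

Section Intervals.
Variable n : nat.
Implicit Types (x y u v : vec n) (p q : vec n * vec n).

Lemma vleP x y : reflect (forall i, x i <= y i) (vle x y).
Proof. exact: forallP. Qed.

Lemma vle_refl x : vle x x.
Proof. by apply/vleP. Qed.

Lemma vle_trans y x z : vle x y -> vle y z -> vle x z.
Proof. by move=> /vleP xy /vleP yz; apply/vleP => i; apply: le_trans (xy i) (yz i). Qed.

Lemma vec_bounded (s : seq (vec n)) :
  exists a b : vec n, {in s, forall x, vle a x && vle x b}.
Proof.
elim: s => [|y s [a [b ab]]]; first by exists 0, 0.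
exists [ffun i => Order.min (y i) (a i)], [ffun i => Order.max (y i) (b i)].
move=> x /predU1P[->|/ab/andP[/vleP ax /vleP xb]].
  by apply/andP; split; apply/vleP => i; rewrite ffunE ?ge_min ?le_max lexx.
by apply/andP; split; apply/vleP => i; rewrite ffunE ?ge_min ?le_max ?ax ?xb orbT.
Qed.

Definition box (a b : vec n) : seq (vec n) :=
  let K := (\max_(i < n) `|b i - a i|)%N in
  [seq x <- [seq [ffun i => a i + (f i : nat)%:Z] | f : {ffun 'I_n -> 'I_K.+1}]
     | vle a x && vle x b].

Lemma mem_box a b x : (x \in box a b) = vle a x && vle x b.
Proof.
rewrite mem_filter; case ab: (vle a x && vle x b) => //=; case/andP: ab => /vleP ax /vleP xb.
apply/mapP; exists [ffun i => inord `|x i - a i|]; first by rewrite mem_enum.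
have axi i : 0 <= x i - a i by rewrite subr_ge0.
apply/ffunP => i; rewrite !ffunE inordK; first by rewrite abszE ger0_norm // subrKC.
rewrite ltnS; apply: leq_trans (leq_bigmax i).
rewrite -lez_nat !abszE !ger0_norm ?subr_ge0 ?(le_trans (ax i) (xb i)) //.
by have := xb i; lra.
Qed.

Definition contains p u v := [&& vle p.1 u, vle u v & vle v p.2].

Lemma contains_refl p : vle p.1 p.2 -> contains p p.1 p.2.
Proof. by move=> J; rewrite /contains J !vle_refl. Qed.

Definition width p : int := \sum_(i < n) (p.2 i - p.1 i).

Lemma width_ge0 p : vle p.1 p.2 -> 0 <= width p.
Proof. by move=> /vleP J; apply: sumr_ge0 => i _; rewrite subr_ge0. Qed.

Lemma width_lt p q : contains p q.1 q.2 -> p != q -> width q < width p.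
Proof.
case/and3P=> /vleP pq1 _ /vleP pq2; apply: contraNT; rewrite -leNgt => le_pq.
pose t i := (p.2 i - q.2 i) + (q.1 i - p.1 i).
have t_ge0 i : 0 <= t i by rewrite addr_ge0 // subr_ge0.
have sum_t : \sum_i t i = 0.
  have sumE : \sum_i t i = width p - width q.
    by rewrite /width -sumrB; apply: eq_bigr => i _; rewrite /t; ring.
  by apply/eqP; rewrite eq_le sumr_ge0 // andbT sumE subr_le0.
have t0 i : t i = 0 by apply: (psumr_eq0P _ sum_t) => // j _; apply: t_ge0.
have [e1 e2] : p.1 = q.1 /\ p.2 = q.2.
  by split; apply/ffunP => i; have := t0 i; have := pq1 i; have := pq2 i; rewrite /t; lra.
by apply/eqP; rewrite [p]surjective_pairing [q]surjective_pairing e1 e2.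
Qed.

Lemma width_bounded (s : seq (vec n * vec n)) :
  exists m : nat, {in s, forall p, width p < m%:Z}.
Proof.
exists (\max_(q <- s) `|width q|).+1 => p ps.
have le_max : (`|width p| <= \max_(q <- s) `|width q|)%N := leq_bigmax_seq _ ps isT.
move: le_max; rewrite -lez_nat abszE; have := ler_norm (width p); lia.
Qed.

End Intervals.

Lemma big_uniq_support (R : nmodType) (I : eqType) (F : I -> R) (s1 s2 : seq I) :
  uniq s1 -> uniq s2 -> (forall i, F i != 0 -> (i \in s1) && (i \in s2)) ->
  \sum_(i <- s1) F i = \sum_(i <- s2) F i.
Proof.
move=> u1 u2 supp12.
have nz_part s : \sum_(i <- s) F i = \sum_(i <- [seq i <- s | F i != 0]) F i.
  by rewrite big_filter [RHS]big_mkcond; apply: eq_bigr => i _; case: eqP.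
rewrite nz_part [RHS]nz_part; apply/perm_big/uniq_perm; rewrite ?filter_uniq //.
move=> i; rewrite !mem_filter; case/boolP: (F i != 0) => //= /supp12/andP[-> ->] //.
Qed.

Section RankOn.
Variable n : nat.
Implicit Types (s : seq (vec n * vec n)) (c : vec n * vec n -> int) (u v : vec n).

Definition rank_on s c u v : int :=
  \sum_(p <- s) (if contains p u v then c p else 0).

Lemma rank_on0 s u v : rank_on s (fun _ => 0) u v = 0.
Proof. by rewrite /rank_on big1 // => p _; case: ifP. Qed.

Lemma rank_onD s c1 c2 u v :
  rank_on s (fun p => c1 p + c2 p) u v = rank_on s c1 u v + rank_on s c2 u v.
Proof. by rewrite /rank_on -big_split; apply: eq_bigr => p _; case: ifP; rewrite ?addr0. Qed.

Lemma rank_onB s c1 c2 u v :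
  rank_on s (fun p => c1 p - c2 p) u v = rank_on s c1 u v - rank_on s c2 u v.
Proof. by rewrite /rank_on -sumrB; apply: eq_bigr => p _; case: ifP; rewrite ?subr0. Qed.

Lemma rank_on_neq0 s c u v :
  rank_on s c u v != 0 -> exists2 p, p \in s & contains p u v.
Proof.
move=> nz; have /hasP[p ps up] : has (fun p => contains p u v) s; last by exists p.
apply: contraNT nz => /hasPn none; apply/eqP/big1_seq => p /andP[_ ps].
by rewrite (negbTE (none p ps)).
Qed.

Lemma rank_on_top s c q (m : int) :
  uniq s -> q \in s -> vle q.1 q.2 -> (forall p, c p != 0 -> width p <= m) ->
  m <= width q -> rank_on s c q.1 q.2 = c q.
Proof.
move=> us qs qJ c_le mq; rewrite /rank_on (bigD1_seq q) //= contains_refl //.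
rewrite big1 ?addr0 // => p pq; case: ifP => // pq_sub; apply/eqP/negP => /negP cp.
by have := width_lt pq_sub pq; have := c_le _ cp; lra.
Qed.

Lemma rank_on_eq0 s c :
  uniq s -> (forall p, c p != 0 -> (p \in s) && vle p.1 p.2) ->
  (forall u v, rank_on s c u v = 0) -> forall p, c p = 0.
Proof.
move=> us c_supp c0; have [M s_le] := width_bounded s.
suff : forall m : nat, (forall p, c p != 0 -> width p < m%:Z) -> forall p, c p = 0.
  by move=> /(_ M); apply=> p /c_supp/andP[/s_le].
elim=> [|m IH] c_lt p; apply/eqP/negP => /negP cp.
  by have := c_lt _ cp; have /andP[_ /width_ge0] := c_supp _ cp; lia.
move: cp; apply/negP; rewrite negbK; apply/eqP; apply: IH => q cq.
have /andP[qs qJ] := c_supp _ cq; rewrite ltNge; apply/negP => mq.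
have c_le r : c r != 0 -> width r <= m%:Z by move/c_lt; lia.
by move: cq; rewrite -(rank_on_top us qs qJ c_le mq) c0 eqxx.
Qed.

Lemma rank_on_surj s :
  uniq s -> {in s, forall p, vle p.1 p.2} ->
  (forall p q, p \in s -> contains p q.1 q.2 -> q \in s) ->
  forall rho : vec n -> vec n -> int, (forall u v, rho u v != 0 -> (u, v) \in s) ->
  exists c, (forall p, c p != 0 -> p \in s) /\ forall u v, rank_on s c u v = rho u v.
Proof.
move=> us sJ s_closed; have [M s_lt] := width_bounded s.
suff : forall (m : nat) rho,
    (forall u v, rho u v != 0 -> ((u, v) \in s) && (width (u, v) < m%:Z)) ->
    exists c, (forall p, c p != 0 -> p \in s) /\ forall u v, rank_on s c u v = rho u v.
  by move=> /(_ M) + rho rho_s; apply=> u v /rho_s uvs; rewrite uvs s_lt.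
elim=> [|m IH] rho rho_lt.
  exists (fun _ => 0); split=> // u v; rewrite rank_on0; apply/esym/eqP/negP => /negP nz.
  by have /andP[/sJ/width_ge0] := rho_lt _ _ nz; lia.
pose layer q := if width q == m%:Z then rho q.1 q.2 else 0.
have layer_le q : layer q != 0 -> width q <= m%:Z.
  by rewrite /layer; case: ifP => [/eqP-> _ //|_]; rewrite eqxx.
have layer_s q : layer q != 0 -> q \in s.
  by rewrite /layer; case: ifP => // _ /rho_lt/andP[]; case: q.
have [|c [c_s cE]] := IH (fun u v => rho u v - rank_on s layer u v).
  move=> u v nz.
  have uvs : (u, v) \in s.
    have [/rho_lt/andP[] //|rho0] := boolP (rho u v != 0).
    move: nz; rewrite negbK in rho0; rewrite (eqP rho0) sub0r oppr_eq0.
    by case/rank_on_neq0 => p ps /(s_closed _ (u, v) ps).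
  rewrite uvs ltNge; apply/negP => mle; move: nz.
  rewrite (rank_on_top us uvs (sJ _ uvs) layer_le mle) /layer /=.
  case: ifP => [_|/negbT ne]; first by rewrite subrr eqxx.
  by rewrite subr0 => /rho_lt/andP[_]; lia.
exists (fun q => c q + layer q); split.
  move=> q; have [->|/layer_s //] := eqVneq (layer q) 0; rewrite addr0; exact: c_s.
by move=> u v; rewrite rank_onD cE subrK.
Qed.

End RankOn.

Section RankOf.
Variable n : nat.

Lemma rank_of_on s (X : ZJ n) u v :
  uniq s -> {subset supp X <= s} -> rank_of X u v = rank_on s (coef X) u v.
Proof.
move=> us sub; apply: big_uniq_support; rewrite ?undup_uniq // => p.
by case: ifP => // _ /supp_cover ps; rewrite mem_undup ps sub.
Qed.

Lemma rank_of_gen_rank_inv (X : ZJ n) : is_gen_rank_inv (rank_of X).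
Proof.
split=> [u v uv|].
  by rewrite /rank_of big1 // => p _; rewrite (negbTE uv) /= andbF.
have [a [b ab]] := vec_bounded (map fst (supp X) ++ map snd (supp X)).
exists a, b => u v; apply: contraNeq => /rank_on_neq0[p].
rewrite mem_undup => ps /and3P[pu _ vp].
have /andP[ap _] : vle a p.1 && vle p.1 b by apply: ab; rewrite mem_cat map_f.
have /andP[_ pb] : vle a p.2 && vle p.2 b by apply: ab; rewrite mem_cat map_f ?orbT.
by rewrite (vle_trans ap pu) (vle_trans vp pb).
Qed.

Lemma rank_of_inj (X Y : ZJ n) :
  (forall u v, rank_of X u v = rank_of Y u v) -> forall p, coef X p = coef Y p.
Proof.
move=> XY p; apply/eqP; rewrite -subr_eq0; apply/eqP; move: p.
set s := undup (supp X ++ supp Y).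
have us : uniq s := undup_uniq _.
have sX : {subset supp X <= s} by move=> p; rewrite mem_undup mem_cat => ->.
have sY : {subset supp Y <= s} by move=> p; rewrite mem_undup mem_cat => ->; rewrite orbT.
apply: (rank_on_eq0 us).
  move=> p; have [cX0|/[dup]/supp_cover/sX -> /coef_J //] := eqVneq (coef X p) 0.
  by rewrite cX0 sub0r oppr_eq0 => /[dup]/supp_cover/sY -> /coef_J.
by move=> u v; rewrite rank_onB -(rank_of_on u v us sX) -(rank_of_on u v us sY) XY subrr.
Qed.

Lemma rank_of_surj (rho : vec n -> vec n -> int) :
  is_gen_rank_inv rho -> exists X : ZJ n, forall u v, rank_of X u v = rho u v.
Proof.
move=> [rho_J [a [b rho_box]]].
pose B := box a b.
pose s := undup [seq p <- [seq (x, y) | x <- B, y <- B] | vle p.1 p.2].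
have us : uniq s := undup_uniq _.
have mem_s p : (p \in s) = [&& vle a p.1, vle p.1 p.2 & vle p.2 b].
  have mem_pairs x y : ((x, y) \in [seq (x, y) | x <- B, y <- B]) = (x \in B) && (y \in B).
    by apply/allpairsP/andP => [[[x' y'] [? ? [-> ->]]] // | [xB yB]]; exists (x, y).
  rewrite mem_undup mem_filter; case: p => x y /=; rewrite mem_pairs !mem_box.
  apply/idP/and3P => [/andP[xy /andP[/andP[ax _] /andP[_ yb]]] // | [ax xy yb]].
  by rewrite xy ax yb (vle_trans xy yb) (vle_trans ax xy).
have [|||c [c_s cE]] := @rank_on_surj n s us _ _ rho.
- by move=> p; rewrite mem_s => /and3P[].
- move=> p q; rewrite !mem_s => /and3P[ap _ pb] /and3P[pq1 q12 q2p].
  by rewrite q12 (vle_trans ap pq1) (vle_trans q2p pb).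
- move=> u v nz; rewrite mem_s /=.
  have uv : vle u v by apply: contraNT nz => /rho_J ->; rewrite eqxx.
  have /andP[au vb] : vle a u && vle v b by apply: contraNT nz => /rho_box ->; rewrite eqxx.
  by rewrite au uv vb.
have cJ p : c p != 0 -> vle p.1 p.2 by move/c_s; rewrite mem_s => /and3P[].
by exists (@MkZJ n c s c_s cJ) => u v; rewrite /rank_of undup_id //; apply: cE.
Qed.

End RankOf.

Theorem theorem4p11 (n : nat) (hn : (1 <= n)%N) :
  (forall X : ZJ n, is_gen_rank_inv (rank_of X)) /\
  (forall X Y : ZJ n, (forall u v : vec n, rank_of X u v = rank_of Y u v) ->
      forall p, coef X p = coef Y p) /\
  (forall rho : vec n -> vec n -> int, is_gen_rank_inv rho ->
      exists X : ZJ n, forall u v : vec n, rank_of X u v = rho u v).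
Proof.
split; first exact: rank_of_gen_rank_inv.
split; first exact: rank_of_inj.
exact: rank_of_surj.
Qed.
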